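(* Let $f:[-1,1]\to\mathbb{R}$ be continuous and non-decreasing such that $\kappa(\boldsymbol{x},\boldsymbol{y})=f(\langle\boldsymbol{x},\boldsymbol{y}\rangle/n)$ is a valid (positive semidefinite) kernel on $\{-1,+1\}^n$. Let $\mathcal{U}=\{\boldsymbol{u}^1,\ldots,\boldsymbol{u}^p\}\subset\{-1,+1\}^n$ be such that the real $p\times p$ matrix $C$ with entries $c_{\eta\xi}=f(\langle\boldsymbol{u}^\xi,\boldsymbol{u}^\eta\rangle/n)$ is invertible, and let $\rho>0$. The recurrent kernel associative memory (RKAM) is defined as follows: for each $i=1,\ldots,n$, let $\boldsymbol{\beta}_i=(\beta_i^1,\ldots,\beta_i^p)$ be the solution of $$\min\; Q(\boldsymbol{\beta}_i)=\tfrac12\sum_{\xi,\eta=1}^p\beta_i^\xi\beta_i^\eta u_i^\xi u_i^\eta\kappa(\boldsymbol{u}^\xi,\boldsymbol{u}^\eta)-\sum_{\xi=1}^p\beta_i^\xi\quad\text{subject to } 0\le\beta_i^\xi\le\rho,\ \xi=1,\ldots,p,$$ and the state evolves by $x_i(t+1)=\mathrm{sgn}\big(\sum_{\xi=1}^p\beta_i^\xi u_i^\xi\kappa(\boldsymbol{u}^\xi,\boldsymbol{x}(t))\big)$. The bipolar recurrent projection neural network (RPNN) is defined as follows: with $c^{-1}_{\eta\xi}$ the entries of $C^{-1}$, set $v_i^\xi=\sum_{\eta=1}^pu_i^\eta c^{-1}_{\eta\xi}$; from a state $\boldsymbol{x}(t)\in\{-1,+1\}^n$ compute $w_\xi(t)=f(\langle\boldsymbol{x}(t),\boldsymbol{u}^\xi\rangle/n)$,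 $a_i(t)=\sum_{\xi=1}^pw_\xi(t)v_i^\xi$, and set $x_i(t+1)=\mathrm{sgn}(a_i(t))$ if $a_i(t)\neq0$ and $x_i(t+1)=x_i(t)$ otherwise. If the solutions of the quadratic problems satisfy $0<\beta_i^\xi<\rho$ for all $i=1,\ldots,n$ and $\xi=1,\ldots,p$, then the RKAM coincides with the bipolar RPNN (their activation sums $\sum_\xi\beta_i^\xi u_i^\xi\kappa(\boldsymbol{u}^\xi,\boldsymbol{x})$ and $\sum_\xi w_\xi v_i^\xi$ agree for every state $\boldsymbol{x}$). Alternatively, the RKAM and the bipolar RPNN coincide if $0<v_i^\xi u_i^\xi<\rho$ for all $i=1,\ldots,n$ and $\xi=1,\ldots,p$.
   Context: $\langle\boldsymbol{x},\boldsymbol{y}\rangle=\sum_{i=1}^n x_iy_i$ for bipolar vectors $\boldsymbol{x},\boldsymbol{y}\in\{-1,+1\}^n$; $\mathrm{sgn}$ is the sign function. *)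

From HB Require Import structures.
From mathcomp Require Import all_boot all_order all_algebra.
From mathcomp Require Import all_classical all_reals all_analysis.
Set Implicit Arguments. Unset Strict Implicit. Unset Printing Implicit Defensive.
Import Order.TTheory GRing.Theory Num.Theory.
Local Open Scope ring_scope.

Section Defs.
Variables (R : realType) (n p : nat).

Definition bipolar (x : 'I_n -> R) : Prop := forall i, x i = 1 \/ x i = -1.

Definition ip (x y : 'I_n -> R) : R := \sum_(i < n) x i * y i.

Definition kappa (f : R -> R) (x y : 'I_n -> R) : R := f (ip x y / n%:R).

Definition psd_kernel (f : R -> R) : Prop :=
  forall (m : nat) (X : 'I_m -> 'I_n -> R) (c : 'I_m -> R),
    (forall k, bipolar (X k)) ->
    0 <= \sum_(k < m) \sum_(l < m) c k * c l * kappa f (X k) (X l).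

Definition Cmat (f : R -> R) (u : 'I_p -> 'I_n -> R) : 'M[R]_p :=
  \matrix_(eta < p, xi < p) kappa f (u xi) (u eta).

Definition Qobj (f : R -> R) (u : 'I_p -> 'I_n -> R) (i : 'I_n) (b : 'I_p -> R) : R :=
  2^-1 * (\sum_(xi < p) \sum_(eta < p)
            b xi * b eta * u xi i * u eta i * kappa f (u xi) (u eta))
  - \sum_(xi < p) b xi.

Definition in_box (rho : R) (b : 'I_p -> R) : Prop :=
  forall xi, 0 <= b xi <= rho.

Definition QP_solution (f : R -> R) (u : 'I_p -> 'I_n -> R) (rho : R)
    (i : 'I_n) (b : 'I_p -> R) : Prop :=
  in_box rho b /\ forall b', in_box rho b' -> Qobj f u i b <= Qobj f u i b'.

Definition vcoef (f : R -> R) (u : 'I_p -> 'I_n -> R) (i : 'I_n) (xi : 'I_p) : R :=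
  \sum_(eta < p) u eta i * (invmx (Cmat f u)) eta xi.

Definition rkam_act (f : R -> R) (u : 'I_p -> 'I_n -> R) (beta : 'I_n -> 'I_p -> R)
    (x : 'I_n -> R) (i : 'I_n) : R :=
  \sum_(xi < p) beta i xi * u xi i * kappa f (u xi) x.

Definition rpnn_act (f : R -> R) (u : 'I_p -> 'I_n -> R) (x : 'I_n -> R) (i : 'I_n) : R :=
  \sum_(xi < p) f (ip x (u xi) / n%:R) * vcoef f u i xi.

End Defs.

(* With D = diag(u_i^1, ..., u_i^p), the i-th objective is
   Q_i(b) = 1/2 b D C D b^T - sum_k b_k.  Its Hessian D C D is positive
   semidefinite because kappa is a kernel, and invertible because C is, so Q_i
   is convex with the unique stationary point s = u_i C^-1 D, whose entries are
   s^xi = v_i^xi u_i^xi.  A minimiser over the box lying in its interior is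
   stationary, hence equals s.  If instead s lies in the box, every box
   minimiser b satisfies Q_i(b) = Q_i(s) + 1/2 h D C D h^T with h = b - s, so
   h D C D = 0 by semidefiniteness and b = s.  Either way
   beta_i^xi u_i^xi = v_i^xi, which makes the two activation sums agree term
   by term. *)

From HB Require Import structures.
From mathcomp Require Import all_boot all_order all_algebra.
From mathcomp Require Import all_classical all_reals all_analysis.
From mathcomp Require Import ring lra.
Import Order.TTheory GRing.Theory Num.Theory numFieldNormedType.Exports.
Local Open Scope classical_set_scope.
Local Open Scope ring_scope.
Set Implicit Arguments. Unset Strict Implicit. Unset Printing Implicit Defensive.

Lemma quad_ge0_near0_lin_eq0 (R : realFieldType) (g m d1 d2 : R) :
  0 < d1 -> 0 < d2 -> (forall t, - d1 <= t <= d2 -> 0 <= t * g + t ^+ 2 * m) ->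
  g = 0.
Proof.
move=> d1_gt0 d2_gt0 ge0.
have norm_le s : 0 < s -> s <= d1 -> s <= d2 -> `|g| <= s * `|m|.
  move=> s_gt0 s_le1 s_le2.
  have := ge0 s; have := ge0 (- s); rewrite sqrrN.
  have s_in : - d1 <= s <= d2 by apply/andP; split; lra.
  have Ns_in : - d1 <= - s <= d2 by apply/andP; split; lra.
  move=> /(_ Ns_in) gN /(_ s_in) gP.
  apply: (@le_trans _ _ (s * m)); last by rewrite ler_pM2l // ler_norm.
  by rewrite ler_norml; apply/andP; split; nra.
apply/eqP; apply: contraT => g_neq0.
have g_gt0 : 0 < `|g| by rewrite normr_gt0.
pose k := `|g| / (`|m| + 1).
have k_gt0 : 0 < k by rewrite divr_gt0 // ltr_wpDl.
have km : k * `|m| = `|g| - k by rewrite /k; field; rewrite gt_eqF // ltr_wpDl.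
pose s := Num.min (Num.min d1 d2) k.
have := norm_le s; rewrite !lt_min !ge_min d1_gt0 d2_gt0 k_gt0 !lexx /= orbT.
move=> /(_ isT isT isT) g_le.
have : s * `|m| <= k * `|m| by rewrite ler_wpM2r // !ge_min lexx orbT.
lra.
Qed.

Section SymmetricForm.
Variables (R : realFieldType) (p : nat) (M : 'M[R]_p).
Hypothesis M_sym : M^T = M.
Local Notation "''[' u , v ]" := (form idfun M u v).
Local Notation "''[' u ]" := (form idfun M u u).

Lemma form_idfunE u v : '[u, v] = (u *m M *m v^T) 0 0.
Proof. by rewrite /form map_mx_id. Qed.

Lemma form_sym u v : '[u, v] = '[v, u].
Proof.
rewrite !form_idfunE.
have -> : v *m M *m u^T = (u *m M *m v^T)^T by rewrite !trmx_mul trmxK M_sym mulmxA.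
by rewrite [RHS]mxE.
Qed.

Lemma form_deltar u k : '[u, 'e_k] = (u *m M) 0 k.
Proof. by rewrite form_idfunE trmx_delta -colE mxE. Qed.

Lemma form_shift a h t : '[a + t *: h] = '[a] + t * (2 * '[a, h]) + t ^+ 2 * '[h].
Proof.
by rewrite !(formDl, formDr, formZl, formZr) (form_sym h a) /=; ring.
Qed.

Lemma psd_form_eq0 h : (forall v, 0 <= '[v]) -> '[h] = 0 -> h *m M = 0.
Proof.
move=> psd h0; apply/rowP => k; rewrite -form_deltar mxE.
have: 2 * '[h, 'e_k] = 0.
  apply: (@quad_ge0_near0_lin_eq0 _ _ '['e_k] 1 1) => // t _.
  by have := psd (h + t *: 'e_k); rewrite form_shift h0 add0r.
by move/eqP; rewrite mulf_eq0 pnatr_eq0 => /eqP.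
Qed.

Definition qobj (b : 'rV[R]_p) := 2^-1 * '[b] - \sum_k b 0 k.

Definition in_rbox (rho : R) (b : 'rV[R]_p) := forall k, 0 <= b 0 k <= rho.

Definition box_min (rho : R) (b : 'rV[R]_p) :=
  in_rbox rho b /\ forall b', in_rbox rho b' -> qobj b <= qobj b'.

Lemma qobj_shift a h t :
  qobj (a + t *: h) = qobj a + t * ('[a, h] - \sum_k h 0 k) + t ^+ 2 * (2^-1 * '[h]).
Proof.
rewrite /qobj form_shift (eq_bigr (fun k => a 0 k + t * h 0 k)) => [|k _]; last first.
  by rewrite !mxE.
by rewrite big_split /= -mulr_sumr; field.
Qed.

Lemma sum_delta_row k : \sum_j ('e_k : 'rV[R]_p) 0 j = 1.
Proof.
rewrite (bigD1 k) //= big1 => [|j /negbTE jk]; first by rewrite mxE !eqxx addr0.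
by rewrite mxE jk andbF.
Qed.

Lemma stationary_of_interior_box_min rho b :
  box_min rho b -> (forall k, 0 < b 0 k < rho) -> b *m M = const_mx 1.
Proof.
move=> [b_box b_min] b_int; apply/rowP => k.
rewrite -form_deltar [RHS]mxE; apply/eqP; rewrite -subr_eq0 -(sum_delta_row k).
have /andP [bk_gt0 bk_ltrho] := b_int k.
have rho_bk_gt0 : 0 < rho - b 0 k by rewrite subr_gt0.
apply/eqP/(@quad_ge0_near0_lin_eq0 _ _ (2^-1 * '['e_k]) (b 0 k) (rho - b 0 k)) => //.
move=> t /andP [t_ge t_le].
have box : in_rbox rho (b + t *: 'e_k).
  move=> j; rewrite !mxE eqxx /=; have [->|_] := eqVneq j k.
    by rewrite mulr1; apply/andP; split; lra.
  by rewrite mulr0 addr0; exact: b_box.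
by have := b_min _ box; rewrite qobj_shift; lra.
Qed.

Lemma box_min_eq_stationary rho b s :
  (forall v, 0 <= '[v]) -> M \in unitmx ->
  box_min rho b -> in_rbox rho s -> s *m M = const_mx 1 -> b = s.
Proof.
move=> psd M_unit [_ b_min] s_box s_stat.
pose h := b - s.
have lin0 : '[s, h] = \sum_k h 0 k.
  by rewrite form_idfunE s_stat mxE; apply: eq_bigr => k _; rewrite !mxE mul1r.
have hh0 : '[h] = 0.
  apply/eqP; rewrite eq_le psd andbT.
  have bE : b = s + 1 *: h by rewrite scale1r addrC subrK.
  by have := b_min s s_box; rewrite {1}bE qobj_shift lin0 subrr expr1n; lra.
apply/subr0_eq/(can_inj (mulmxK M_unit)).
by rewrite mul0mx; exact: psd_form_eq0.
Qed.

End SymmetricForm.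

Section RkamQuadraticProgram.
Variables (R : realType) (n p : nat) (f : R -> R) (u : 'I_p -> 'I_n -> R).

Lemma ip_sym (x y : 'I_n -> R) : ip x y = ip y x.
Proof. by apply: eq_bigr => k _; rewrite mulrC. Qed.

Lemma kappa_sym (x y : 'I_n -> R) : kappa f x y = kappa f y x.
Proof. by rewrite /kappa ip_sym. Qed.

Lemma Cmat_sym : (Cmat f u)^T = Cmat f u.
Proof. by apply/matrixP => eta xi; rewrite !mxE kappa_sym. Qed.

Lemma bipolar_sqr (x : 'I_n -> R) k : bipolar x -> x k * x k = 1.
Proof. by move=> /(_ k) [] ->; rewrite ?mulrNN mulr1. Qed.

Variable i : 'I_n.

Definition coord_row : 'rV[R]_p := \row_xi u xi i.

Definition qp_hessian : 'M[R]_p :=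
  diag_mx coord_row *m Cmat f u *m diag_mx coord_row.

Lemma qp_hessian_sym : qp_hessian^T = qp_hessian.
Proof. by rewrite /qp_hessian !trmx_mul !tr_diag_mx Cmat_sym mulmxA. Qed.

Lemma form_qp_hessian a b :
  form idfun qp_hessian a b =
  \sum_xi \sum_eta a 0 xi * b 0 eta * (u xi i * u eta i * kappa f (u xi) (u eta)).
Proof.
rewrite form_idfunE /qp_hessian mul_mx_diag mul_diag_mx mxE exchange_big /=.
under eq_bigr => eta _ do rewrite !mxE mulr_suml.
apply: eq_bigr => eta _; apply: eq_bigr => xi _.
by rewrite !mxE (kappa_sym (u eta)); ring.
Qed.

Lemma Qobj_qobj b : Qobj f u i b = qobj qp_hessian (\row_k b k).
Proof.
rewrite /Qobj /qobj form_qp_hessian; congr (_ * _ - _); last first.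
  by apply: eq_bigr => k _; rewrite mxE.
apply: eq_bigr => xi _; apply: eq_bigr => eta _; rewrite !mxE; ring.
Qed.

Lemma QP_solution_box_min rho b :
  QP_solution f u rho i b -> box_min qp_hessian rho (\row_k b k).
Proof.
move=> [b_box b_min]; split=> [k | b' b'_box]; first by rewrite mxE.
have -> : b' = \row_k b' 0 k by apply/rowP => k; rewrite mxE.
by rewrite -!Qobj_qobj; exact: b_min.
Qed.

Hypothesis u_bip : forall xi, bipolar (u xi).

Lemma qp_hessian_psd : psd_kernel n f -> forall v, 0 <= form idfun qp_hessian v v.
Proof.
move=> psd v; have := psd p u (fun k => v 0 k * u k i) u_bip.
rewrite form_qp_hessian; congr (_ <= _).
by apply: eq_bigr => xi _; apply: eq_bigr => eta _; ring.
Qed.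

Lemma diag_coord_row_sqr : diag_mx coord_row *m diag_mx coord_row = 1%:M.
Proof.
rewrite mulmx_diag -diag_const_mx; congr diag_mx.
by apply/rowP => k; rewrite !mxE bipolar_sqr.
Qed.

Hypothesis C_unit : Cmat f u \in unitmx.

Lemma qp_hessian_unit : qp_hessian \in unitmx.
Proof.
have [D_unit _] := mulmx1_unit diag_coord_row_sqr.
by rewrite !unitmx_mul D_unit C_unit.
Qed.

Definition rpnn_point : 'rV[R]_p :=
  coord_row *m invmx (Cmat f u) *m diag_mx coord_row.

Lemma rpnn_pointE xi : rpnn_point 0 xi = vcoef f u i xi * u xi i.
Proof.
rewrite /rpnn_point mul_mx_diag !mxE; congr (_ * _).
by apply: eq_bigr => eta _; rewrite mxE.
Qed.

Lemma rpnn_point_stationary : rpnn_point *m qp_hessian = const_mx 1.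
Proof.
rewrite /rpnn_point /qp_hessian !mulmxA.
rewrite -[_ *m diag_mx coord_row *m diag_mx coord_row]mulmxA.
rewrite diag_coord_row_sqr mulmx1 mulmxKV //.
by apply/rowP => k; rewrite mul_mx_diag !mxE; exact: bipolar_sqr.
Qed.

Lemma rkam_act_rpnn_act beta x :
  \row_k beta i k = rpnn_point -> rkam_act f u beta x i = rpnn_act f u x i.
Proof.
move=> /rowP beta_eq; apply: eq_bigr => xi _.
have := beta_eq xi; rewrite mxE rpnn_pointE => ->.
by rewrite -(mulrA (vcoef _ _ _ _)) bipolar_sqr // mulr1 /kappa ip_sym mulrC.
Qed.

End RkamQuadraticProgram.

Theorem theorem3 (R : realType) (n p : nat) (f : R -> R)
    (u : 'I_p -> 'I_n -> R) (rho : R) (beta : 'I_n -> 'I_p -> R) :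
  {within `[-1, 1], continuous f} ->
  (forall x y : R, -1 <= x <= 1 -> -1 <= y <= 1 -> x <= y -> f x <= f y) ->
  psd_kernel n f ->
  (forall xi, bipolar (u xi)) ->
  Cmat f u \in unitmx ->
  0 < rho ->
  (forall i, QP_solution f u rho i (beta i)) ->
  ((forall i xi, 0 < beta i xi < rho) ->
     forall x : 'I_n -> R, bipolar x ->
       forall i, rkam_act f u beta x i = rpnn_act f u x i)
  /\
  ((forall i xi, 0 < vcoef f u i xi * u xi i < rho) ->
     forall x : 'I_n -> R, bipolar x ->
       forall i, rkam_act f u beta x i = rpnn_act f u x i).
Proof.
move=> _ _ psd u_bip C_unit _ QP.
split=> [beta_int | v_box] x _ i; apply: rkam_act_rpnn_act => //.
- apply: (can_inj (mulmxK (qp_hessian_unit i u_bip C_unit))).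
  rewrite rpnn_point_stationary //.
  apply: (stationary_of_interior_box_min (qp_hessian_sym f u i)
    (QP_solution_box_min (QP i))).
  by move=> k; rewrite mxE.
- apply: (box_min_eq_stationary (qp_hessian_sym f u i) (qp_hessian_psd i u_bip psd)
    (qp_hessian_unit i u_bip C_unit) (QP_solution_box_min (QP i))).
  + by move=> k; rewrite rpnn_pointE; case/andP: (v_box i k) => /ltW -> /ltW ->.
  + exact: rpnn_point_stationary.
Qed.
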